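(* Let $n>24$, $\beta>\frac{\log 3}{\log n}$, $\lambda>\frac12$, and $m=n^{1/2+\beta+\lambda}$ (assumed to be an integer). Then $$\mathsf P\left\{\left|\sum_{i=1}^n \frac{k_i(x)(k_i(x)-1)}{m(m-1)}\cdot\frac{1}{\|p\|^2}-1\right|\le \frac{22}{5}\,n^{-\beta/2}\right\}\ \ge\ 1-\frac{10}{9}e^{-n^{\lambda-1/2}}.$$
   Context: Standing setup: $U$ is a finite set (the key space) with a probability measure $q$; $T=\{1,\dots,n\}$; $h:U\to T$ is an arbitrary function. $p_i=\sum_{u\in h^{-1}(i)}q(u)$ and $\|p\|^2=\sum_{i=1}^n p_i^2$. $U^m$ carries the product measure $q^m$, and $\mathsf P$ denotes probability under $q^m$ of the event for $x=(x_1,\dots,x_m)\in U^m$. $k_i(x)=|\{j: h(x_j)=i\}|$. *)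

From mathcomp Require Import all_boot all_order all_algebra.
From mathcomp Require Import all_classical all_reals all_analysis.
Set Implicit Arguments. Unset Strict Implicit. Unset Printing Implicit Defensive.
Import Order.TTheory GRing.Theory Num.Theory.
Local Open Scope ring_scope.

Definition is_prob (R : realType) (U : finType) (q : U -> R) : Prop :=
  (forall u, 0 <= q u) /\ \sum_(u : U) q u = 1.

Definition pmass (R : realType) (U : finType) (n : nat) (q : U -> R)
  (h : U -> 'I_n) (i : 'I_n) : R :=
  \sum_(u : U | h u == i) q u.

Definition pnorm2 (R : realType) (U : finType) (n : nat) (q : U -> R)
  (h : U -> 'I_n) : R :=
  \sum_(i < n) pmass q h i ^+ 2.

Definition kcount (U : finType) (n m : nat) (h : U -> 'I_n)
  (x : {ffun 'I_m -> U}) (i : 'I_n) : nat :=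
  #|[set j : 'I_m | h (x j) == i]|.

Definition probm (R : realType) (U : finType) (m : nat) (q : U -> R)
  (E : {ffun 'I_m -> U} -> bool) : R :=
  \sum_(x : {ffun 'I_m -> U} | E x) \prod_(j < m) q (x j).

(* The normalised collision count  U = sum_i k_i (k_i - 1) / (m (m - 1))  is the
   U-statistic of order two with kernel [h u = h v], whose mean is ||p||^2.
   Hoeffding's decomposition writes k U, for k = floor(m/2), as the average over all
   permutations s of the kernel summed over the k disjoint pairs (s j, s (j + k)).
   By convexity of exp and independence of these pairs,
     E exp(t k U) <= (1 + (e^t - 1) ||p||^2)^k <= exp(k ||p||^2 (e^t - 1)),
   and Chernoff's bound with t = 2 eps / (5 + 2 eps), resp. t = - eps / 2, gives
   upper and lower relative deviations of probability at most
   exp(- k ||p||^2 6 eps^2 / (5 (5 + 2 eps))) and exp(- k ||p||^2 eps^2 / 4).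
   For eps = 22/5 n^(-beta/2), ||p||^2 >= 1/n and m = n^(1/2 + beta + lambda) both
   exponents exceed n^(lambda - 1/2) by enough to yield the constant 10/9. *)

From mathcomp Require Import all_boot all_order all_algebra all_fingroup.
From mathcomp Require Import all_classical all_reals all_analysis.
From mathcomp Require Import ring lra zify.
Import Order.TTheory GRing.Theory Num.Theory.
Local Open Scope ring_scope.

Set Implicit Arguments. Unset Strict Implicit. Unset Printing Implicit Defensive.

Section ProductMeasure.
Variables (R : realType) (U : finType) (q : U -> R).
Hypothesis q_ge0 : forall u, 0 <= q u.

Definition expectm m (f : {ffun 'I_m -> U} -> R) : R :=
  \sum_(x : {ffun 'I_m -> U}) (\prod_(j < m) q (x j)) * f x.

Lemma ler_expectm m (f g : {ffun 'I_m -> U} -> R) :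
  (forall x, f x <= g x) -> expectm f <= expectm g.
Proof.
by move=> fg; apply: ler_sum => x _; rewrite ler_wpM2l ?prodr_ge0.
Qed.

Lemma expectmZ m (c : R) (f : {ffun 'I_m -> U} -> R) :
  expectm (fun x => c * f x) = c * expectm f.
Proof. by rewrite /expectm mulr_sumr; apply: eq_bigr => x _; rewrite mulrCA. Qed.

Lemma expectm_sum m (I : finType) (g : I -> {ffun 'I_m -> U} -> R) :
  expectm (fun x => \sum_i g i x) = \sum_i expectm (g i).
Proof.
rewrite /expectm exchange_big /=; apply: eq_bigr => x _; exact: mulr_sumr.
Qed.

Lemma expectm_prod m (g : 'I_m -> U -> R) :
  expectm (fun x => \prod_(i < m) g i (x i)) = \prod_(i < m) \sum_u q u * g i u.
Proof.
by rewrite bigA_distr_bigA /=; apply: eq_bigr => x _; rewrite big_split.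
Qed.

Lemma probm_le_expectm m (E : {ffun 'I_m -> U} -> bool) (f : {ffun 'I_m -> U} -> R) :
  (forall x, 0 <= f x) -> (forall x, E x -> 1 <= f x) -> probm q E <= expectm f.
Proof.
move=> f_ge0 Ef; rewrite /probm /expectm big_mkcond /=; apply: ler_sum => x _.
have qx_ge0 : 0 <= \prod_(j < m) q (x j) by exact: prodr_ge0.
case: (boolP (E x)) => [/Ef Ef1|_]; last by rewrite mulr_ge0.
by rewrite -{1}[\prod_(j < m) _]mulr1 ler_wpM2l.
Qed.

Lemma le_probm m (E E' : {ffun 'I_m -> U} -> bool) :
  (forall x, E x -> E' x) -> probm q E <= probm q E'.
Proof.
move=> EE'; rewrite /probm !(big_mkcond E) !(big_mkcond E'); apply: ler_sum => x _.
case: (boolP (E x)) => [/EE' -> //|_]; case: ifP => // _.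
by apply: prodr_ge0 => j _.
Qed.

Lemma le_probmU m (E E1 E2 : {ffun 'I_m -> U} -> bool) :
  (forall x, E x -> E1 x || E2 x) -> probm q E <= probm q E1 + probm q E2.
Proof.
move=> E12; rewrite /probm !(big_mkcond E) !(big_mkcond E1) !(big_mkcond E2).
rewrite -big_split; apply: ler_sum => x _.
have qx_ge0 : 0 <= \prod_(j < m) q (x j) by exact: prodr_ge0.
case: (boolP (E x)) => [/E12|_]; last by rewrite addr_ge0 //; case: (E1 x); case: (E2 x).
by case/orP=> ->; [rewrite lerDl | rewrite lerDr]; case: ifP.
Qed.

Lemma probmC m (E : {ffun 'I_m -> U} -> bool) :
  \sum_u q u = 1 -> probm q E = 1 - probm q (fun x => ~~ E x).
Proof.
move=> q1; have total : \sum_(x : {ffun 'I_m -> U}) \prod_(j < m) q (x j) = 1.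
  by rewrite -(bigA_distr_bigA (fun (j : 'I_m) u => q u)) /= q1 prodr_const expr1n.
by rewrite /probm -[X in X - _]total [X in X - _](bigID E) /= addrK.
Qed.

Lemma chernoff_probm m (f : {ffun 'I_m -> U} -> R) (c t : R) : 0 <= t ->
  probm q (fun x => c < f x) <= expR (- (t * c)) * expectm (fun x => expR (t * f x)).
Proof.
move=> t0; rewrite -expectmZ; apply: probm_le_expectm => [x|x cf].
  by rewrite mulr_ge0 ?expR_ge0.
rewrite -expRD -expR0 ler_expR -mulrN -mulrDr addrC mulr_ge0 // subr_ge0.
exact: ltW.
Qed.

End ProductMeasure.

Lemma prod_pairs (R : comPzSemiRingType) (F : nat -> R) (k m : nat) :
  (k + k <= m)%N -> (forall i, (k + k <= i)%N -> F i = 1) ->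
  \prod_(i < m) F i = \prod_(j < k) (F j * F (j + k)%N).
Proof.
move=> km F1; rewrite -(big_mkord xpredT) (big_cat_nat (leq0n _) km) /=.
rewrite [X in _ * X]big_nat_cond [X in _ * X]big1 ?mulr1; last first.
  by move=> i /andP[/andP[ki _] _]; exact: F1.
rewrite (big_cat_nat (leq0n k) (leq_addl k k)) /= -{2}(add0n k) big_addn addnK.
by rewrite -big_split big_mkord.
Qed.

Section PairIndependence.
Variables (R : realType) (U : finType) (q : U -> R).
Hypothesis q_sum1 : \sum_u q u = 1.

Lemma expectm_prod_pairsM m' k (g g' : 'I_k -> U -> R) : (k + k <= m'.+1)%N ->
  expectm q (fun x : {ffun 'I_m'.+1 -> U} =>
    \prod_(j < k) (g j (x (inord j)) * g' j (x (inord (j + k))))) =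
  \prod_(j < k) ((\sum_u q u * g j u) * (\sum_u q u * g' j u)).
Proof.
move=> km.
pose G i u := if insub i is Some j then g j u
              else if insub (i - k)%N is Some j then g' j u else 1.
have G_fst (j : 'I_k) : G j = g j by rewrite /G valK.
have G_snd (j : 'I_k) : G (j + k)%N = g' j.
  by rewrite /G insubF ?addnK ?valK //= ltnNge leq_addl.
have G_rest i u : (k + k <= i)%N -> G i u = 1.
  by move=> ki; rewrite /G !insubF //=; apply/negbTE; lia.
transitivity (expectm q (fun x : {ffun 'I_m'.+1 -> U} => \prod_(i < m'.+1) G i (x i))).
  congr expectm; apply: funext => x.
  rewrite (eq_bigr (fun i : 'I_m'.+1 => G i (x (inord i)))) => [|i _]; last first.
    by rewrite inord_val.
  rewrite (prod_pairs (F := fun i => G i (x (inord i))) km) => [|i ki]; last exact: G_rest.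
  by apply: eq_bigr => j _; rewrite G_fst G_snd.
rewrite (expectm_prod q (fun i : 'I_m'.+1 => G i)).
rewrite (prod_pairs (F := fun i => \sum_u q u * G i u) km) => [|i ki].
  by apply: eq_bigr => j _; rewrite G_fst G_snd.
by under eq_bigr => u _ do rewrite G_rest // mulr1.
Qed.

Lemma expectm_prod_pairs m' k (F : U -> U -> R) : (k + k <= m'.+1)%N ->
  expectm q (fun x : {ffun 'I_m'.+1 -> U} =>
    \prod_(j < k) F (x (inord j)) (x (inord (j + k)))) =
  (\sum_u \sum_v q u * q v * F u v) ^+ k.
Proof.
move=> km.
(* Expanding [F] over the value of its first argument makes every factor a
   product of functions of single coordinates. *)
have F_sum u v : F u v = \sum_o (u == o)%:R * F o v.
  rewrite (bigD1 u) //= eqxx mul1r big1 ?addr0 // => o.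
  by rewrite eq_sym => /negbTE ->; rewrite mul0r.
transitivity (\sum_(f : {ffun 'I_k -> U}) expectm q (fun x : {ffun 'I_m'.+1 -> U} =>
    \prod_(j < k) ((x (inord j) == f j)%:R * F (f j) (x (inord (j + k)))))).
  rewrite -expectm_sum; congr expectm; apply: funext => x.
  by under eq_bigr => j _ do rewrite F_sum; rewrite bigA_distr_bigA.
under eq_bigr => f _ do rewrite (expectm_prod_pairsM
  (fun j u => (u == f j)%:R) (fun j => F (f j)) km).
rewrite -(bigA_distr_bigA (fun (j : 'I_k) o =>
  (\sum_u q u * (u == o)%:R) * \sum_v q v * F o v)).
rewrite /= prodr_const card_ord; congr (_ ^+ _); apply: eq_bigr => u _.
rewrite (bigD1 u) //= eqxx mulr1 big1 ?addr0 => [|v /negbTE ->]; last by rewrite mulr0.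
by rewrite mulr_sumr; apply: eq_bigr => v _; rewrite mulrA.
Qed.

End PairIndependence.

Definition permute (U : finType) m (s : {perm 'I_m}) (x : {ffun 'I_m -> U}) :
  {ffun 'I_m -> U} := [ffun i => x (s i)].

Lemma expectm_permute (R : realType) (U : finType) (q : U -> R) m (s : {perm 'I_m})
    (f : {ffun 'I_m -> U} -> R) :
  expectm q (fun x => f (permute s x)) = expectm q f.
Proof.
have permuteK : cancel (@permute U m s) (permute (s^-1)%g).
  by move=> x; apply/ffunP => i; rewrite !ffunE permKV.
rewrite /expectm [RHS](reindex_inj (can_inj permuteK)); apply: eq_bigr => x _.
congr (_ * _); rewrite [RHS](reindex_inj (@perm_inj _ (s^-1)%g)).
by apply: eq_bigr => i _; rewrite ffunE permKV.
Qed.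

Section PairSums.
Variables (R : nmodType) (U : finType) (m : nat) (K : U -> U -> R).

Definition pairsum (x : {ffun 'I_m -> U}) : R :=
  \sum_(a < m) \sum_(b < m | b != a) K (x a) (x b).

Definition perm_pairsum (x : {ffun 'I_m -> U}) (i0 i1 : 'I_m) : R :=
  \sum_(s : {perm 'I_m}) K (x (s i0)) (x (s i1)).

Lemma perm_pairsum_indep x (i0 i1 j0 j1 : 'I_m) :
  i0 != i1 -> j0 != j1 -> perm_pairsum x i0 i1 = perm_pairsum x j0 j1.
Proof.
move=> i01 j01.
pose j2 := tperm j0 i0 j1.
pose t := (tperm j0 i0 * tperm j2 i1)%g.
have j2i0 : j2 != i0.
  by rewrite /j2 -{2}(tpermL j0 i0) (inj_eq (@perm_inj _ _)) eq_sym.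
have tj0 : t j0 = i0 by rewrite permM tpermL tpermD // eq_sym.
have tj1 : t j1 = i1 by rewrite permM -/j2 tpermL.
rewrite /perm_pairsum -tj0 -tj1 [RHS](reindex_inj (mulgI t)).
by apply: eq_bigr => s _; rewrite !permM.
Qed.

Lemma sum_perm_pairsum x :
  \sum_(i0 < m) \sum_(i1 < m | i1 != i0) perm_pairsum x i0 i1 =
  pairsum x *+ #|{perm 'I_m}|.
Proof.
under eq_bigr => i0 _ do rewrite exchange_big /=.
rewrite exchange_big /= -sumr_const; apply: eq_bigr => s _.
rewrite /pairsum (reindex_inj (@perm_inj _ (s^-1)%g)); apply: eq_bigr => a _.
rewrite (reindex_inj (@perm_inj _ (s^-1)%g)) /=; apply: eq_big => [b|b _].
  by rewrite (inj_eq (@perm_inj _ _)).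
by rewrite !permKV.
Qed.

Lemma perm_pairsumE x (i0 i1 : 'I_m) :
  i0 != i1 -> perm_pairsum x i0 i1 *+ (m * m.-1) = pairsum x *+ #|{perm 'I_m}|.
Proof.
move=> i01; have sum_neq_const (c : R) (a : 'I_m) : \sum_(b < m | b != a) c = c *+ m.-1.
  rewrite sumr_const -[in RHS](card_ord m) -(cardC1 a).
  by congr (_ *+ _); apply: eq_card => b; rewrite !inE.
rewrite -sum_perm_pairsum mulnC mulrnA -[X in _ *+ X](card_ord m) -sumr_const.
apply: eq_bigr => a _; rewrite -(sum_neq_const _ a); apply: eq_bigr => b ba.
by apply: perm_pairsum_indep; rewrite // eq_sym.
Qed.

End PairSums.

Definition blocksum (R : nmodType) (U : finType) m' k (K : U -> U -> R)
  (x : {ffun 'I_m'.+1 -> U}) : R :=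
  \sum_(j < k) K (x (inord j)) (x (inord (j + k))).

Lemma sum_blocksum_permute (R : nmodType) (U : finType) m' k (K : U -> U -> R) x :
  (k + k <= m'.+1)%N ->
  (\sum_(s : {perm 'I_m'.+1}) blocksum k K (permute s x)) *+ (m'.+1 * m') =
  pairsum K x *+ (k * #|{perm 'I_m'.+1}|).
Proof.
move=> km; rewrite /blocksum exchange_big /= -sumrMnl [(k * _)%N]mulnC mulrnA.
rewrite -[X in _ = _ *+ X](card_ord k) -sumr_const; apply: eq_bigr => j _.
rewrite -(@perm_pairsumE _ _ _ K x (inord j) (inord (j + k))).
  by congr (_ *+ _); apply: eq_bigr => s _; rewrite !ffunE.
have jk := ltn_ord j; apply/eqP => /(congr1 val) /=; rewrite !inordK; lia.
Qed.

Definition ustat (R : numFieldType) (U : finType) m (K : U -> U -> R)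
  (x : {ffun 'I_m -> U}) : R :=
  pairsum K x / (m%:R * (m%:R - 1)).

Lemma ustat_perm_mean (R : numFieldType) (U : finType) m' k (K : U -> U -> R) x :
  (k + k <= m'.+1)%N ->
  k%:R * ustat K x =
  (\sum_(s : {perm 'I_m'.+1}) blocksum k K (permute s x)) / #|{perm 'I_m'.+1}|%:R.
Proof.
move=> km; have [->|k_gt0] := posnP k.
  by rewrite mul0r big1 ?mul0r // => s _; rewrite /blocksum big_ord0.
have N_neq0 : #|{perm 'I_m'.+1}|%:R != 0 :> R.
  by rewrite pnatr_eq0 -lt0n; apply/card_gt0P; exists 1%g.
have m'_gt0 : (0 < m')%N by clear -km k_gt0; lia.
have M_neq0 : (m'.+1 * m')%:R != 0 :> R.
  by rewrite pnatr_eq0 muln_eq0 negb_or -!lt0n m'_gt0.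
have := sum_blocksum_permute K x km.
rewrite -[LHS]mulr_natr -[RHS]mulr_natr [in RHS]natrM => E.
have M : m'.+1%:R * (m'.+1%:R - 1) = (m'.+1 * m')%:R :> R.
  by rewrite natrM -natr1 addrK natr1.
rewrite /ustat M; apply: (mulIf N_neq0); rewrite divfK //.
apply: (mulIf M_neq0); rewrite E mulrAC mulrA divfK //.
by rewrite mulrA [pairsum K x * _]mulrC.
Qed.

Lemma expR_mean_le (R : realType) (I : finType) (y : I -> R) : (0 < #|I|)%N ->
  expR ((\sum_i y i) / #|I|%:R) <= (\sum_i expR (y i)) / #|I|%:R.
Proof.
move=> I_gt0; set N : R := #|I|%:R; set c := (\sum_i y i) / N.
have N_gt0 : 0 < N by rewrite ltr0n.
have tangent i : expR c * (1 + (y i - c)) <= expR (y i).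
  rewrite -[in X in _ <= X](subrKC c (y i)) expRD.
  by rewrite ler_wpM2l ?expR_ge0 ?expR_ge1Dx.
rewrite ler_pdivlMr //; apply: le_trans (ler_sum _ (fun i _ => tangent i)).
rewrite -mulr_sumr big_split /= sumrB !sumr_const -[c *+ _]mulr_natr -/N.
by rewrite /c divfK ?gt_eqF // subrr addr0 mulr_natr.
Qed.

Section ExpMoments.
Variables (R : realType) (U : finType) (q : U -> R).
Hypotheses (q_ge0 : forall u, 0 <= q u) (q_sum1 : \sum_u q u = 1).

Lemma expectm_expR_blocksum m' k (K : U -> U -> R) (t : R) : (k + k <= m'.+1)%N ->
  expectm q (fun x : {ffun 'I_m'.+1 -> U} => expR (t * blocksum k K x)) =
  (\sum_u \sum_v q u * q v * expR (t * K u v)) ^+ k.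
Proof.
move=> km; rewrite -(expectm_prod_pairs q_sum1 _ km); congr expectm; apply: funext => x.
by rewrite /blocksum mulr_sumr expR_sum.
Qed.

Lemma expectm_expR_ustat_le m' k (K : U -> U -> R) (t : R) : (k + k <= m'.+1)%N ->
  expectm q (fun x : {ffun 'I_m'.+1 -> U} => expR (t * k%:R * ustat K x)) <=
  (\sum_u \sum_v q u * q v * expR (t * K u v)) ^+ k.
Proof.
move=> km; set N := #|{perm 'I_m'.+1}|.
have N_gt0 : (0 < N)%N by apply/card_gt0P; exists 1%g.
apply: (@le_trans _ _ (expectm q (fun x => (\sum_(s : {perm 'I_m'.+1})
    expR (t * blocksum k K (permute s x))) / N%:R))).
  apply: ler_expectm => // x; rewrite -mulrA ustat_perm_mean // mulrA mulr_sumr.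
  exact: (expR_mean_le (fun s : {perm 'I_m'.+1} => t * blocksum k K (permute s x))).
under eq_fun => x do rewrite mulrC.
rewrite expectmZ expectm_sum.
under eq_bigr => s _ do rewrite (expectm_permute q s (fun x => expR (t * blocksum k K x))).
rewrite expectm_expR_blocksum // sumr_const -[#|_|]/N -[X in _ * X]mulr_natl mulKf //.
by rewrite pnatr_eq0 -lt0n.
Qed.

End ExpMoments.

Definition coll (R : nzSemiRingType) (U : finType) n (h : U -> 'I_n) (u v : U) : R :=
  (h u == h v)%:R.

Lemma sum_kcount_coll (R : nzRingType) (U : finType) n m (h : U -> 'I_n)
    (x : {ffun 'I_m -> U}) :
  \sum_(i < n) (kcount h x i)%:R * ((kcount h x i)%:R - 1) = pairsum (coll R h) x.
Proof.
have kcountE i : (kcount h x i)%:R = \sum_(a < m) (h (x a) == i)%:R :> R.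
  rewrite /kcount -sum1_card natr_sum big_mkcond; apply: eq_bigr => a _.
  by rewrite inE; case: eqP.
under eq_bigr => i _ do rewrite {1}kcountE mulr_suml.
rewrite exchange_big /=; apply: eq_bigr => a _.
rewrite (bigD1 (h (x a))) //= eqxx mul1r big1 => [|i /negbTE ia]; last first.
  by rewrite eq_sym ia mul0r.
rewrite addr0 kcountE (bigD1 a) //= eqxx addrAC subrr add0r.
by apply: eq_bigr => b _; rewrite eq_sym.
Qed.

Lemma sum_kcount_ustat (R : realType) (U : finType) n m (h : U -> 'I_n)
    (x : {ffun 'I_m -> U}) :
  \sum_(i < n) (kcount h x i)%:R * ((kcount h x i)%:R - 1) / (m%:R * (m%:R - 1)) =
  ustat (coll R h) x.
Proof. by rewrite -mulr_suml sum_kcount_coll. Qed.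

Section Collisions.
Variables (R : realType) (U : finType) (q : U -> R) (n : nat) (h : U -> 'I_n).

Lemma collision_prob : \sum_u \sum_v q u * q v * coll R h u v = pnorm2 q h.
Proof.
have inner u : \sum_v q u * q v * coll R h u v = q u * pmass q h (h u).
  rewrite /pmass mulr_sumr [RHS]big_mkcond; apply: eq_bigr => v _.
  by rewrite /coll eq_sym; case: eqP; rewrite ?mulr1 ?mulr0.
under eq_bigr => u _ do rewrite inner.
rewrite (partition_big h xpredT) //=; apply: eq_bigr => i _.
by rewrite expr2 [in RHS]/pmass mulr_suml; apply: eq_bigr => u /eqP ->.
Qed.

Lemma sum_expR_coll (t : R) : \sum_u q u = 1 ->
  \sum_u \sum_v q u * q v * expR (t * coll R h u v) = 1 + (expR t - 1) * pnorm2 q h.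
Proof.
move=> q1; have expR_coll u v : expR (t * coll R h u v) = 1 + (expR t - 1) * coll R h u v.
  by rewrite /coll; case: eqP; rewrite ?mulr1 ?mulr0 ?expR0 ?addr0 // addrC subrK.
have pair_sum1 : \sum_u \sum_v q u * q v = 1.
  by under eq_bigr => u _ do rewrite -mulr_sumr q1 mulr1.
rewrite -{1}pair_sum1 -collision_prob mulr_sumr -big_split /=; apply: eq_bigr => u _.
rewrite mulr_sumr -big_split /=; apply: eq_bigr => v _.
by rewrite expR_coll; ring.
Qed.

Lemma pnorm2_ge0 : 0 <= pnorm2 q h.
Proof. by apply: sumr_ge0 => i _; exact: sqr_ge0. Qed.

Lemma pnorm2_le1 : is_prob q -> pnorm2 q h <= 1.
Proof.
move=> [q0 q1]; rewrite -collision_prob -(mul1r 1) -{1}q1 mulr_suml.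
apply: ler_sum => u _; rewrite -q1 mulr_sumr; apply: ler_sum => v _.
by rewrite /coll ler_piMr ?mulr_ge0 //; case: eqP.
Qed.

Lemma pnorm2_ge_inv : is_prob q -> (0 < n)%N -> n%:R^-1 <= pnorm2 q h.
Proof.
move=> [q0 q1] n_gt0; set t : R := n%:R^-1.
have pmass1 : \sum_(i < n) pmass q h i = 1 by rewrite -q1 /pmass (partition_big h xpredT).
have tn : t * n%:R = 1 by rewrite mulVf // pnatr_eq0 -lt0n.
have tangent i : 2 * t * pmass q h i - t ^+ 2 <= pmass q h i ^+ 2.
  by have := sqr_ge0 (pmass q h i - t); nra.
have := ler_sum (index_enum 'I_n) (fun i (_ : true) => tangent i).
rewrite sumrB -mulr_sumr pmass1 sumr_const card_ord -mulr_natr.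
have : t ^+ 2 * n%:R = t by rewrite expr2 -mulrA tn mulr1.
rewrite /pnorm2; lra.
Qed.

End Collisions.

Lemma expR_le_inv1B (R : realType) (t : R) : t < 1 -> expR t <= (1 - t)^-1.
Proof.
move=> t1; have -> : expR t = (expR (- t))^-1 by rewrite expRN invrK.
by rewrite lef_pV2 ?posrE ?expR_gt0 ?subr_gt0 //; have := expR_ge1Dx (- t); lra.
Qed.

Lemma expRN_le_inv1D (R : realType) (t : R) : 0 <= t -> expR (- t) <= (1 + t)^-1.
Proof.
move=> t0; rewrite expRN lef_pV2 ?posrE ?expR_gt0 ?expR_ge1Dx //; lra.
Qed.

Lemma chernoff_upper_exponent_le (R : realType) (e : R) : 0 <= e ->
  expR (2 * e / (5 + 2 * e)) - 1 - 2 * e / (5 + 2 * e) * (1 + e) <=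
  - (e ^+ 2 * 6 / (5 * (5 + 2 * e))).
Proof.
move=> e0; have t1 : 2 * e / (5 + 2 * e) < 1 by rewrite ltr_pdivrMr; lra.
apply: le_trans (lerD (lerD (expR_le_inv1B t1) (lexx _)) (lexx _)) _.
by rewrite le_eqVlt; apply/orP; left; apply/eqP; field; lra.
Qed.

Lemma chernoff_lower_exponent_le (R : realType) (e : R) : 0 <= e ->
  expR (- (e / 2)) - 1 + e / 2 * (1 - e) <= - (e ^+ 2 / 4).
Proof.
move=> e0; have e2 : 0 <= e / 2 by lra.
apply: le_trans (lerD (lerD (expRN_le_inv1D e2) (lexx _)) (lexx _)) _.
have -> : (1 + e / 2)^-1 - 1 + e / 2 * (1 - e) = - (e ^+ 2 * (1 + e) / (2 * (2 + e))).
  by field; lra.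
rewrite lerN2 ler_pdivrMr; last by lra.
rewrite mulrAC ler_pdivlMr; last by lra.
by have : 0 <= e ^+ 2 := sqr_ge0 e; nra.
Qed.

Section CollisionTails.
Variables (R : realType) (U : finType) (q : U -> R) (n : nat) (h : U -> 'I_n).
Hypothesis q_prob : is_prob q.
Local Notation mu := (pnorm2 q h).

Lemma ustat_coll_ge0 m' (x : {ffun 'I_m'.+1 -> U}) : 0 <= ustat (coll R h) x.
Proof.
rewrite /ustat divr_ge0 ?mulr_ge0 ?ler0n ?subr_ge0 ?ler1n //.
by do 2 (apply: sumr_ge0 => ? _); rewrite ler0n.
Qed.

Lemma expectm_expR_coll_ustat_le m' k t : (k + k <= m'.+1)%N ->
  expectm q (fun x : {ffun 'I_m'.+1 -> U} => expR (t * k%:R * ustat (coll R h) x)) <=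
  expR (k%:R * ((expR t - 1) * mu)).
Proof.
move=> km; have [q0 q1] := q_prob.
apply: le_trans (expectm_expR_ustat_le q0 q1 _ _ km) _.
rewrite sum_expR_coll // expRM_natl.
apply: lerXn2r; rewrite ?nnegrE ?expR_ge0 ?expR_ge1Dx //.
have := pnorm2_ge0 q h; have := pnorm2_le1 h q_prob; have := expR_gt0 t; nra.
Qed.

Lemma ustat_coll_upper_tail m' k e : (k + k <= m'.+1)%N -> 0 <= e ->
  probm q (fun x : {ffun 'I_m'.+1 -> U} => mu * (1 + e) < ustat (coll R h) x) <=
  expR (- (k%:R * mu * e ^+ 2 * 6 / (5 * (5 + 2 * e)))).
Proof.
move=> km e0; have [q0 _] := q_prob; set t := 2 * e / (5 + 2 * e).
have t0 : 0 <= t by rewrite divr_ge0; lra.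
apply: le_trans (chernoff_probm q0 _ _ (mulr_ge0 t0 (ler0n _ k))) _.
apply: le_trans (ler_wpM2l (expR_ge0 _) (expectm_expR_coll_ustat_le t km)) _.
have kmu0 : 0 <= k%:R * mu by rewrite mulr_ge0 ?pnorm2_ge0.
rewrite -expRD ler_expR.
have := ler_wpM2l kmu0 (chernoff_upper_exponent_le e0); rewrite -/t.
have -> : - (t * k%:R * (mu * (1 + e))) + k%:R * ((expR t - 1) * mu) =
  k%:R * mu * (expR t - 1 - t * (1 + e)) by ring.
by have -> : - (k%:R * mu * e ^+ 2 * 6 / (5 * (5 + 2 * e))) =
  k%:R * mu * - (e ^+ 2 * 6 / (5 * (5 + 2 * e))) by ring.
Qed.

Lemma ustat_coll_lower_tail m' k e : (k + k <= m'.+1)%N -> 0 <= e ->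
  probm q (fun x : {ffun 'I_m'.+1 -> U} => ustat (coll R h) x < mu * (1 - e)) <=
  expR (- (k%:R * mu * e ^+ 2 / 4)).
Proof.
move=> km e0; have [q0 _] := q_prob; set t := e / 2.
have t0 : 0 <= t by rewrite /t; lra.
have -> : (fun x : {ffun 'I_m'.+1 -> U} => ustat (coll R h) x < mu * (1 - e)) =
  (fun x => - (mu * (1 - e)) < - ustat (coll R h) x).
  by apply: funext => x; rewrite ltrN2.
apply: le_trans (chernoff_probm q0 _ _ (mulr_ge0 t0 (ler0n _ k))) _.
have -> : (fun x : {ffun 'I_m'.+1 -> U} => expR (t * k%:R * - ustat (coll R h) x)) =
  (fun x => expR (- t * k%:R * ustat (coll R h) x)).
  by apply: funext => x; congr expR; ring.
apply: le_trans (ler_wpM2l (expR_ge0 _) (expectm_expR_coll_ustat_le (- t) km)) _.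
have kmu0 : 0 <= k%:R * mu by rewrite mulr_ge0 ?pnorm2_ge0.
rewrite -expRD ler_expR.
have := ler_wpM2l kmu0 (chernoff_lower_exponent_le e0); rewrite -/t.
have -> : - (t * k%:R * - (mu * (1 - e))) + k%:R * ((expR (- t) - 1) * mu) =
  k%:R * mu * (expR (- t) - 1 + t * (1 - e)) by ring.
by have -> : - (k%:R * mu * e ^+ 2 / 4) = k%:R * mu * - (e ^+ 2 / 4) by ring.
Qed.

End CollisionTails.

(* For [e >= 1] the lower deviation is impossible, the U-statistic being nonnegative. *)
Lemma ustat_coll_concentration (R : realType) (U : finType) (q : U -> R) n
    (h : U -> 'I_n) m' k (e : R) :
  is_prob q -> (0 < n)%N -> (k + k <= m'.+1)%N -> 0 < e ->
  probm q (fun x : {ffun 'I_m'.+1 -> U} =>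
    ~~ (`|ustat (coll R h) x / pnorm2 q h - 1| <= e)) <=
  expR (- (k%:R * pnorm2 q h * e ^+ 2 * 6 / (5 * (5 + 2 * e)))) +
  (e < 1)%R%:R * expR (- (k%:R * pnorm2 q h * e ^+ 2 / 4)).
Proof.
move=> q_prob n_gt0 km e_gt0; have [q0 _] := q_prob.
have mu_gt0 : 0 < pnorm2 q h.
  by apply: lt_le_trans (pnorm2_ge_inv h q_prob n_gt0); rewrite invr_gt0 ltr0n.
have deviation (x : {ffun 'I_m'.+1 -> U}) :
    ~~ (`|ustat (coll R h) x / pnorm2 q h - 1| <= e) ->
    (pnorm2 q h * (1 + e) < ustat (coll R h) x) ||
    (ustat (coll R h) x < pnorm2 q h * (1 - e)).
  have := divfK (lt0r_neq0 mu_gt0) (ustat (coll R h) x).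
  set t := ustat _ x / _ => <-; rewrite -ltNge ltr_normr.
  by case/orP => dev; apply/orP; [left | right]; nra.
have e0 := ltW e_gt0; case: ltP => e1; rewrite ?mul1r ?mul0r ?addr0.
  apply: le_trans (le_probmU q0 deviation) _.
  exact: lerD (ustat_coll_upper_tail h q_prob km e0) (ustat_coll_lower_tail h q_prob km e0).
apply: le_trans (ustat_coll_upper_tail h q_prob km e0).
apply: (le_probm q0) => x /deviation /orP[] // U_lt.
have : pnorm2 q h * (1 - e) <= 0 by rewrite pmulr_rle0 // subr_le0.
have := @ustat_coll_ge0 R U n h m' x; lra.
Qed.

Lemma expRN_le_scale (R : realType) (a X c : R) :
  a <= X -> 1 <= c * (1 + (X - a)) -> expR (- X) <= c * expR (- a).
Proof.
move=> aX c1; have d_gt0 : 0 < 1 + (X - a) by lra.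
rewrite -[X in expR (- X)](subrKC a) opprD expRD mulrC ler_wpM2r ?expR_ge0 //.
apply: le_trans (expRN_le_inv1D _) _; first lra.
by rewrite -[_^-1]mul1r ler_pdivrMr.
Qed.

Lemma corollary3_tail_sum_le (R : realType) (a e Z : R) :
  1 < a -> 0 < e -> e ^+ 2 < 484 / 75 -> 242 / 25 * a - 27 / 200 <= Z ->
  expR (- (Z * 6 / (5 * (5 + 2 * e)))) + (e < 1)%R%:R * expR (- (Z / 4)) <=
  10 / 9 * expR (- a).
Proof.
move=> a1 e_gt0 e2 aZ; set X := Z * 6 / (5 * (5 + 2 * e)).
have XD : X * (5 * (5 + 2 * e)) = Z * 6 by rewrite /X divfK //; lra.
have [e1|e1] := ltP e 1; rewrite ?mul1r ?mul0r ?addr0.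
  have X_ge : Z * 6 <= X * 35 by nra.
  have eX : expR (- X) <= 5 / 8 * expR (- a) by apply: expRN_le_scale; lra.
  have eZ : expR (- (Z / 4)) <= 9 / 20 * expR (- a) by apply: expRN_le_scale; lra.
  have := expR_ge0 (- a); lra.
have e_lt : e < 51 / 20 by nra.
have X_ge : Z * 6 <= X * (101 / 2) by nra.
have eX : expR (- X) <= 9 / 10 * expR (- a) by apply: expRN_le_scale; lra.
have := expR_ge0 (- a); lra.
Qed.

Lemma corollary3_exponent_ge (R : realType) (N a b e k mu : R) :
  24 < N -> 1 < a -> 3 < b -> e ^+ 2 * b = 484 / 25 ->
  N * a * b - 1 <= 2 * k -> N^-1 <= mu ->
  e ^+ 2 < 484 / 75 /\ 242 / 25 * a - 27 / 200 <= k * mu * e ^+ 2.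
Proof.
move=> N24 a0 b3 e2b km muN; have e2_ge0 : 0 <= e ^+ 2 := sqr_ge0 e.
have e2 : e ^+ 2 < 484 / 75 by nra.
split => //; set Z := k * mu * e ^+ 2.
have Na_gt : 24 < N * a by nra.
have k_ge0 : 0 <= k by nra.
have mu_N : 1 <= mu * N.
  by rewrite -(mulVf (x := N)) ?gt_eqF ?ler_wpM2r //; lra.
have Z_N : 2 * k * e ^+ 2 <= 2 * Z * N.
  have -> : 2 * Z * N = 2 * k * e ^+ 2 * (mu * N) by rewrite /Z; ring.
  by have := mulr_ge0 k_ge0 e2_ge0; nra.
have : (N * a * b - 1) * e ^+ 2 <= 2 * k * e ^+ 2 by rewrite ler_wpM2r.
have -> : (N * a * b - 1) * e ^+ 2 = N * a * (484 / 25) - e ^+ 2 by rewrite -e2b; ring.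
(* The loss [e^2 / (2 N)] is at most [(484/75) / 48 < 27/200]. *)
set w := 2 * Z - 484 / 25 * a => ZN.
have : - (484 / 75) <= w * N by rewrite /w; nra.
nra.
Qed.

Lemma corollary3_scales (R : realType) (N beta lambda : R) :
  1 < N -> ln 3 / ln N < beta -> 1 / 2 < lambda ->
  [/\ 1 < N `^ (lambda - 1 / 2), 3 < N `^ beta, 0 < 22 / 5 * N `^ (- (beta / 2)),
      (22 / 5 * N `^ (- (beta / 2))) ^+ 2 * N `^ beta = 484 / 25 &
      N `^ (1 / 2 + beta + lambda) = N * N `^ (lambda - 1 / 2) * N `^ beta].
Proof.
move=> N1 beta_gt lambda_gt; have lnN_gt0 : 0 < ln N by apply: ln_gt0.
have powE x : N `^ x = expR (x * ln N) by rewrite /powR gt_eqF //; lra.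
split.
- by rewrite powE expR_gt1 mulr_gt0 //; lra.
- by rewrite powE -[3](@lnK R) ?posrE // ltr_expR -ltr_pdivrMr.
- by rewrite mulr_gt0 ?powR_gt0 //; lra.
- rewrite !powE exprMn expr2 -!mulrA -!expRD.
  by rewrite (_ : _ + _ = 0) ?expR0 ?mulr1; [field | field].
rewrite !powE -mulrA -expRD -[X in X * expR _](@lnK R) ?posrE; last lra.
by rewrite -expRD; congr expR; field.
Qed.

Lemma ler_natr_half (R : realDomainType) m : m%:R - 1 <= 2 * (m./2)%:R :> R.
Proof.
have : (m <= (m./2).*2.+1)%N by rewrite -leq_half_double.
by rewrite -(ler_nat R) -addn1 natrD -muln2 natrM; lra.
Qed.

Unset Implicit Arguments. Set Strict Implicit. Set Printing Implicit Defensive.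

Theorem corollary3 (R : realType) (U : finType) (q : U -> R) (n : nat)
  (h : U -> 'I_n) (beta lambda : R) (m : nat) :
  is_prob q ->
  (24 < n)%N ->
  ln 3 / ln n%:R < beta ->
  1 / 2 < lambda ->
  m%:R = n%:R `^ (1 / 2 + beta + lambda) ->
  probm q (fun x : {ffun 'I_m -> U} =>
    `| (\sum_(i < n) ((kcount h x i)%:R * ((kcount h x i)%:R - 1))
          / (m%:R * (m%:R - 1))) * (pnorm2 q h)^-1 - 1 |
      <= 22 / 5 * n%:R `^ (- (beta / 2)))
  >= 1 - 10 / 9 * expR (- (n%:R `^ (lambda - 1 / 2))).
Proof.
move=> q_prob n24 beta_gt lambda_gt m_eq.
have [_ q1] := q_prob; have n_gt0 : (0 < n)%N by apply: leq_ltn_trans n24.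
have N24 : 24 < n%:R :> R by rewrite ltr_nat.
have N1 : 1 < n%:R :> R by lra.
have [a_gt1 b_gt3 e_gt0 e2b mE] := corollary3_scales N1 beta_gt lambda_gt.
rewrite mE in m_eq; have mk := ler_natr_half R m; rewrite m_eq in mk.
have [e2_lt rate] :=
  corollary3_exponent_ge N24 a_gt1 b_gt3 e2b mk (pnorm2_ge_inv h q_prob n_gt0).
case: m m_eq {mk} rate => [|m'] m_eq rate.
  have : 0 < n%:R * n%:R `^ (lambda - 1 / 2) * n%:R `^ beta by rewrite !mulr_gt0 //; lra.
  by rewrite -m_eq ltxx.
under [X in probm q X]funext => x do rewrite sum_kcount_ustat.
rewrite (probmC _ q1) lerD2l lerN2.
have km : (m'.+1./2 + m'.+1./2 <= m'.+1)%N by rewrite addnn -geq_half_double.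
apply: le_trans (ustat_coll_concentration h q_prob n_gt0 km e_gt0) _.
exact: corollary3_tail_sum_le.
Qed.
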